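(* Let $\Gamma$ be a finite directed graph. The map $\pi\circ\zeta:Y(U(1),\Gamma)\to H^1(\Gamma;\mathbb{R})$ takes values in $\mathcal{Z}_-(\Gamma)$, and $\pi\circ\zeta:Y(U(1),\Gamma)\to\mathcal{Z}_-(\Gamma)$ is a homotopy equivalence: it induces a bijection $\pi_0(Y(U(1),\Gamma))\to\mathcal{Z}_-(\Gamma)$, and each connected component of $Y(U(1),\Gamma)$ is contractible.
   Context: $\Gamma=(V,A,h,t)$ is a finite directed graph. An oriented cycle is a set $\{(a_1,\epsilon_1),\ldots,(a_k,\epsilon_k)\}\subset A\times\{\pm1\}$ such that, writing $h(-a)=t(a)$ and $t(-a)=h(a)$, we have $h(\epsilon_ia_i)=t(\epsilon_{i+1}a_{i+1})$ for $i<k$ and $h(\epsilon_ka_k)=t(\epsilon_1a_1)$, the vertices $h(\epsilon_ia_i)$ are distinct, and $a_1\ne a_2$ if $k=2$. For a group $G$, $Y(G,\Gamma)$ is the space of maps $\lambda:A\to G\setminus\{\mathrm{id}\}$ such that $\lambda(a_1)^{\epsilon_1}\cdots\lambda(a_k)^{\epsilon_k}=\mathrm{id}$ for every oriented cycle. Let $C^1(\Gamma;\mathbb{R})=\mathbb{R}^A$ be the cellular 1-cochains and $\pi:C^1(\Gamma;\mathbb{R})\to H^1(\Gamma;\mathbb{R})$ the natural surjection (dual to the inclusion $H_1(\Gamma;\mathbb{R})\hookrightarrow C_1(\Gamma;\mathbb{R})$). Let $\arg:U(1)\setminus\{1\}\to(0,1)$ be the normalized argument ($\arg(e^{2\pi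 i s})=s$ for $s\in(0,1)$), and $\zeta:Y(U(1),\Gamma)\to C^1(\Gamma;\mathbb{R})$, $\zeta(\lambda)(a)=\arg(\lambda(a))$. $\mathcal{Z}_-(\Gamma)$ is the set of points of the lattice $H^1(\Gamma;\mathbb{Z})$ lying in the interior of the zonotope $\pi([0,1]^A)\subset H^1(\Gamma;\mathbb{R})$ (equivalently, $\mathcal{Z}_-(\Gamma)=\pi((0,1)^A)\cap H^1(\Gamma;\mathbb{Z})$). *)

From HB Require Import structures.
From mathcomp Require Import all_boot all_order all_algebra.
From mathcomp Require Import all_classical all_reals all_analysis.
From mathcomp Require Import complex.
Import numFieldTopology.Exports numFieldNormedType.Exports.

Set Implicit Arguments.
Unset Strict Implicit.
Unset Printing Implicit Defensive.

Import Order.TTheory GRing.Theory Num.Theory.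
Local Open Scope classical_set_scope.
Local Open Scope ring_scope.

(* The complex numbers R[i] (R a real field) with their usual metric topology
   (the one induced by the complex modulus). *)
HB.instance Definition _ (R : realType) :=
  PseudoPointedMetric.copy R[i] (R[i] : numFieldType)^o.

(* An oriented arrow (a, e) with e : bool encodes e*a where true = +1 and    *)
(* false = -1; h(-a) = t(a), t(-a) = h(a).                                  *)
Section Graph.
Variables (V A : finType) (hd tl : A -> V).

Definition ohead (p : A * bool) : V := if p.2 then hd p.1 else tl p.1.
Definition otail (p : A * bool) : V := if p.2 then tl p.1 else hd p.1.

Definition oriented_cycle (c : seq (A * bool)) : Prop :=
  [/\ c <> [::],
      cycle (fun p q => ohead p == otail q) c,
      uniq (map ohead c)
    & (match c with [:: p; q] => p.1 <> q.1 | _ => True end)].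

End Graph.

Section U1.
Variable R : realType.
Local Open Scope complex_scope.

Definition U1_minus_1 (z : R[i]) : Prop := `|z| = 1 /\ z <> 1.

Definition opow (z : R[i]) (e : bool) : R[i] := if e then z else z^-1.

Definition nargC (z : R[i]) : R :=
  xget 0 [set s : R | 0 < s < 1 /\
          z = (cos (2 * pi * s)) +i* (sin (2 * pi * s))].

Variables (V A : finType) (hd tl : A -> V).

Definition YU1 : set {ptws A -> R[i]} :=
  [set lam | (forall a, U1_minus_1 (lam a)) /\
     (forall c, oriented_cycle hd tl c ->
        \prod_(p <- c) opow (lam p.1) p.2 = 1)].

Definition zeta (lam : A -> R[i]) : A -> R := fun a => nargC (lam a).

(* cellular 1-chains and 1-cycles: H_1(Gamma;R) = Z_1 = ker (boundary) *)
Definition boundary (z : A -> R) (v : V) : R :=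
  \sum_(a | hd a == v) z a - \sum_(a | tl a == v) z a.
Definition is_cycle (z : A -> R) : Prop := forall v, boundary z v = 0.
Definition H1R := {z : A -> R | is_cycle z}.

(* H^1(Gamma;R) = Hom(H_1(Gamma;R), R); pi : C^1 -> H^1 is the dual of the
   inclusion H_1 -> C_1, i.e. restriction of the cochain to cycles. *)
Definition H1coR := H1R -> R.
Definition piH1 (x : A -> R) : H1coR := fun z => \sum_a x a * sval z a.

Definition H1Z : set H1coR :=
  [set p | exists n : A -> int, p = piH1 (fun a => (n a)%:~R)].

Definition Zminus : set H1coR :=
  [set p | (exists x : A -> R, (forall a, 0 < x a < 1) /\ p = piH1 x) /\ H1Z p].

End U1.

Definition contractible (R : realType) (T : topologicalType) (C : set T) : Prop :=
  exists x0 : T, C x0 /\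
  exists H : (R * T)%type -> T,
    [/\ {within `[0%R, 1%R] `*` C, continuous H},
        (forall s x, 0 <= s <= 1 -> C x -> C (H (s, x))),
        (forall x, C x -> H (0, x) = x)
      & (forall x, C x -> H (1, x) = x0)].

Arguments YU1 R {V A} hd tl _.
Arguments zeta R {A} lam _.
Arguments piH1 R {V A} hd tl x _.
Arguments Zminus R {V A} hd tl _.
Arguments H1Z R {V A} hd tl _.

From Pilot Require Import Defs.
From HB Require Import structures.
From mathcomp Require Import all_boot all_order all_algebra.
From mathcomp Require Import all_classical all_reals all_analysis.
From mathcomp Require Import complex.
From mathcomp Require Import ring lra.
Import numFieldTopology.Exports numFieldNormedType.Exports.
Import Order.TTheory GRing.Theory Num.Theory.

Set Implicit Arguments.
Unset Strict Implicit.
Unset Printing Implicit Defensive.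

Local Open Scope classical_set_scope.
Local Open Scope ring_scope.

(* Writing lam = e2pi \o x with x : A -> (0,1) (so x = zeta lam), the cycle
   condition on lam says that x has integral sum along every oriented cycle,
   i.e. that pi x lies in H^1(Gamma;Z).  Hence zeta identifies Y(U(1),Gamma)
   with the open cube (0,1)^A cut by the preimages of lattice points of pi,
   and each such piece is convex: straight segments give the homotopies.
   Pieces of different class are separated because, after subtracting a
   coboundary built from a spanning forest, x becomes integral; this reduced
   cochain depends continuously on lam, so it is locally constant on Y and
   so is its class pi x. *)

Section Circle.
Variable R : realType.
Local Open Scope complex_scope.
Implicit Types (s t : R) (z : R[i]).

Definition e2pi s : R[i] := cos (2 * pi * s) +i* sin (2 * pi * s).

(* A closed formula for the normalized argument on U(1) \ {1}: unlike nargC it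
   is visibly continuous wherever Re z <> 1. *)
Definition arg01 z : R := 2^-1 - atan (complex.Im z / (1 - complex.Re z)) / pi.

Lemma pi_neq0 : (pi : R) != 0. Proof. by rewrite gt_eqF // pi_gt0. Qed.

Lemma cos_double t : cos (2 * t) = 1 - 2 * sin t ^+ 2.
Proof. by rewrite mulr2n mulrDl mul1r cosD -!expr2 cos2sin2; ring. Qed.

Lemma sin_double t : sin (2 * t) = 2 * sin t * cos t.
Proof. by rewrite mulrDl mul1r sinD; ring. Qed.

Lemma normr_e2pi s : `|e2pi s| = 1.
Proof. by rewrite normc_def /= cos2Dsin2 sqrtr1. Qed.

Lemma e2pi_neq0 s : e2pi s != 0.
Proof. by rewrite -normr_eq0 normr_e2pi oner_eq0. Qed.

Lemma e2pi0 : e2pi 0 = 1.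
Proof. by rewrite /e2pi mulr0 cos0 sin0. Qed.

Lemma e2pi1 : e2pi 1 = 1.
Proof. by rewrite /e2pi mulr1 mulr_natl cos2pi sin2pi. Qed.

Lemma e2piD s t : e2pi (s + t) = e2pi s * e2pi t.
Proof.
rewrite /e2pi !mulrDr cosD sinD; apply/eqP; rewrite eq_complex /=.
by apply/andP; split; apply/eqP; ring.
Qed.

Lemma e2piN s : e2pi (- s) = (e2pi s)^-1.
Proof.
by apply: (mulfI (e2pi_neq0 s)); rewrite -e2piD subrr e2pi0 divff // e2pi_neq0.
Qed.

Lemma e2pi_nat n : e2pi n%:R = 1.
Proof. by elim: n => [|n IH]; rewrite ?e2pi0 // -addn1 natrD e2piD IH e2pi1 mulr1. Qed.

Lemma e2pi_int (k : int) : e2pi k%:~R = 1.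
Proof. by case: k => n; rewrite ?NegzE ?mulrNz ?e2piN e2pi_nat ?invr1. Qed.

Lemma arg01_gt0_lt1 z : 0 < arg01 z < 1.
Proof.
rewrite /arg01; set t := atan _.
have pi_gt0 := pi_gt0 R.
have t_lt : t / pi < 2^-1 by rewrite ltr_pdivrMr // mulrC atan_ltpi2.
have t_gt : - 2^-1 < t / pi by rewrite ltr_pdivlMr // mulNr mulrC atan_gtNpi2.
by apply/andP; split; lra.
Qed.

Lemma arg01_e2pi s : 0 < s < 1 -> arg01 (e2pi s) = s.
Proof.
move=> /andP[s_gt0 s_lt1]; rewrite /arg01 /e2pi /=.
set y := pi * s.
have y_gt0 : 0 < y by rewrite mulr_gt0 // pi_gt0.
have y_ltpi : y < pi by rewrite /y -[X in _ < X]mulr1 ltr_pM2l // pi_gt0.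
have sin_gt0 : 0 < sin y by apply: sin_gt0_pi; rewrite y_gt0 y_ltpi.
rewrite -mulrA -/y cos_double sin_double.
have -> : 2 * sin y * cos y / (1 - (1 - 2 * sin y ^+ 2)) = tan (pi / 2 - y).
  have -> : pi / 2 - y = - (y - pi / 2) by ring.
  rewrite /tan sinN cosN sinBpihalf cosBpihalf opprK.
  field; have h : 0 < sin y ^+ 2 by rewrite exprn_gt0.
  by apply/andP; split; rewrite gt_eqF //; lra.
rewrite tanK; last by rewrite in_itv /=; apply/andP; split; have := pi_gt0 R; lra.
by rewrite /y mulrBl [pi * s]mulrC mulfK ?pi_neq0 // mulrAC divff ?pi_neq0 // mul1r; lra.
Qed.

Lemma U1_minus_1_Re_lt1 (a b : R) :
  U1_minus_1 (a +i* b) -> a < 1 /\ a ^+ 2 + b ^+ 2 = 1.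
Proof.
rewrite /U1_minus_1 normc_def => -[[]] norm1 neq1.
have ab1 : a ^+ 2 + b ^+ 2 = 1.
  by rewrite -[LHS]sqr_sqrtr ?addr_ge0 ?sqr_ge0 // norm1 expr1n.
split => //; rewrite ltNge; apply/negP => a_ge1; apply: neq1.
have b0 : b = 0 by apply/eqP; rewrite -sqrf_eq0; have := sqr_ge0 b; nra.
have a1 : a = 1 by move: ab1; rewrite b0; nra.
by rewrite a1 b0.
Qed.

Lemma U1_minus_1_Re_neq1 z : U1_minus_1 z -> complex.Re z != 1.
Proof. by case: z => a b /U1_minus_1_Re_lt1[a_lt1 _]; rewrite lt_eqF. Qed.

Lemma e2pi_arg01 z : U1_minus_1 z -> e2pi (arg01 z) = z.
Proof.
case: z => a b /U1_minus_1_Re_lt1 [a_lt1 ab1]; rewrite /arg01 /e2pi /=.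
set u := b / (1 - a); set t := atan u.
have cos_gt0 : 0 < cos t by apply: cos_gt0_pihalf; rewrite atan_gtNpi2 atan_ltpi2.
have tan_t : tan t = u by rewrite atanK.
have sin_t : sin t = u * cos t by rewrite -tan_t /tan divfK // gt_eqF.
have b2 : b ^+ 2 = 1 - a ^+ 2 by lra.
have a1_neq0 : 1 - a != 0 by rewrite gt_eqF // subr_gt0.
have cos2_t : cos t ^+ 2 = (1 - a) / 2.
  have := cos2_tan2 (negbT (gt_eqF cos_gt0)).
  have -> : 1 + tan t ^+ 2 = 2 / (1 - a) by rewrite tan_t /u expr_div_n b2; field.
  by move=> h; rewrite -[LHS]invrK h invf_div.
have -> : 2 * pi * (2^-1 - t / pi) = pi - 2 * t.
  by rewrite mulrBr [t / pi]mulrC mulrA mulfK ?pi_neq0 // mulrAC divff ?mul1r.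
rewrite cosB sinB cospi sinpi cos_double sin_double !mul0r addr0 sub0r !mulN1r.
congr (_ +i* _).
  by rewrite opprB sin_t exprMn cos2_t /u expr_div_n b2; field.
by rewrite opprK sin_t -!mulrA -expr2 cos2_t /u; field.
Qed.

Lemma U1_minus_1_e2pi s : 0 < s < 1 -> U1_minus_1 (e2pi s).
Proof.
move=> s01; split; first exact: normr_e2pi.
move=> e1; have := arg01_e2pi s01; rewrite e1 /arg01 /= subrr mul0r atan0 mul0r subr0.
move=> s_half; move: e1; rewrite -s_half /e2pi => -[+ _].
have -> : 2 * pi / 2 = pi :> R by rewrite mulrAC divff ?mul1r.
by rewrite cospi => /eqP; rewrite -subr_eq0 -opprD oppr_eq0 -mulr2n pnatr_eq0.
Qed.

Lemma e2pi_eq1 t : (e2pi t == 1) = (t \is a Num.int).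
Proof.
apply/eqP/idP => [e1 | /intrP[k ->]]; last exact: e2pi_int.
rewrite intrEfloor; have /andP[fl_le fl_gt] := floor_itv t.
set k := Num.floor t in fl_le fl_gt *.
apply/negPn/negP => t_nint.
have frac01 : 0 < t - k%:~R < 1.
  apply/andP; split; first by rewrite subr_gt0 lt_neqAle t_nint fl_le.
  by move: fl_gt; rewrite intrD; lra.
have [_] := U1_minus_1_e2pi frac01; apply.
by rewrite e2piD e2piN e2pi_int invr1 mulr1.
Qed.

Lemma nargC_arg01 z : U1_minus_1 z -> nargC z = arg01 z.
Proof.
move=> z1; rewrite /nargC; case: xgetP => [s _ [s01 ->] | nex].
  by rewrite [RHS]arg01_e2pi.
exfalso; apply: (nex (arg01 z)); split; first exact: arg01_gt0_lt1.
exact: esym (e2pi_arg01 z1).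
Qed.

Lemma nargC_e2pi s : 0 < s < 1 -> nargC (e2pi s) = s.
Proof. by move=> s01; rewrite nargC_arg01 ?arg01_e2pi //; exact: U1_minus_1_e2pi. Qed.

End Circle.

Section CycleSums.
Variable R : realType.
Variables (V A : finType) (hd tl : A -> V).
Local Notation ohead := (Defs.ohead hd tl).
Local Notation otail := (Defs.otail hd tl).
Local Notation piH1 := (piH1 R hd tl).
Implicit Types (x : A -> R) (c q : seq (A * bool)).

Definition osign (e : bool) : R := if e then 1 else -1.

Definition cycle_sum x c : R := \sum_(p <- c) osign p.2 * x p.1.

Definition chain_of c : A -> R := fun a => \sum_(p <- c) (p.1 == a)%:R * osign p.2.

Definition coboundary (f : V -> R) : A -> R := fun a => f (hd a) - f (tl a).

Definition integral_on_cycles x :=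
  forall c, oriented_cycle hd tl c -> cycle_sum x c \is a Num.int.

Definition adjacent (p q : A * bool) := ohead p == otail q.

Lemma osign_coboundary (f : V -> R) p :
  osign p.2 * coboundary f p.1 = f (ohead p) - f (otail p).
Proof. by case: p => a [] /=; rewrite /osign ?mul1r // mulN1r opprB. Qed.

Lemma cycle_sum_int y c :
  {in c, forall p, y p.1 \is a Num.int} -> cycle_sum y c \is a Num.int.
Proof.
move=> y_int; rewrite /cycle_sum big_seq; apply: rpred_sum => p /y_int.
by case: (p.2); rewrite /osign ?mul1r ?mulN1r ?rpredN.
Qed.

Lemma cycle_sumE x c : cycle_sum x c = \sum_a x a * chain_of c a.
Proof.
under [RHS]eq_bigr => a _ do rewrite big_distrr /=.
rewrite exchange_big /=; apply: eq_bigr => p _.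
rewrite (bigD1 p.1) //= eqxx mul1r big1 ?addr0 1?mulrC // => a.
by rewrite eq_sym => /negPf ->; rewrite mul0r mulr0.
Qed.

Lemma cycle_sum_cons x p c : cycle_sum x (p :: c) = osign p.2 * x p.1 + cycle_sum x c.
Proof. exact: big_cons. Qed.

Lemma sum_chain_of (P : pred A) c :
  \sum_(a | P a) chain_of c a = \sum_(p <- c) (P p.1)%:R * osign p.2.
Proof.
rewrite /chain_of (exchange_big_dep predT) //=; apply: eq_bigr => p _.
rewrite big_mkcond /= (bigD1 p.1) //= eqxx mul1r big1 ?addr0.
  by case: (P p.1); rewrite ?mul1r ?mul0r.
by move=> a /negPf; rewrite eq_sym => ->; rewrite mul0r; case: (P a).
Qed.

Lemma sum_path_telescope (f : V -> R) p0 q : path adjacent p0 q ->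
  \sum_(p <- q) (f (ohead p) - f (otail p)) = f (ohead (last p0 q)) - f (ohead p0).
Proof.
elim: q p0 => [|p q IH] p0 /=; first by rewrite big_nil subrr.
by move=> /andP[/eqP e pq]; rewrite big_cons (IH p) // e; ring.
Qed.

Lemma is_cycle_chain_of c : cycle adjacent c -> is_cycle hd tl (chain_of c).
Proof.
move=> c_cycle v; rewrite /boundary !sum_chain_of -sumrB.
under eq_bigr => p _ do
  rewrite -mulrBl mulrC (osign_coboundary (fun w => (w == v)%:R)).
case: c c_cycle => [|p0 q] c_cycle; first by rewrite big_nil.
have rot : perm_eq (rcons q p0) (p0 :: q) by rewrite perm_rcons.
rewrite -(perm_big _ rot).
by rewrite (sum_path_telescope (fun w => (w == v)%:R) c_cycle) last_rcons subrr.
Qed.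

Lemma cycle_sum_piH1 x c (c_cycle : cycle adjacent c) :
  cycle_sum x c = piH1 x (exist _ (chain_of c) (is_cycle_chain_of c_cycle)).
Proof. exact: cycle_sumE. Qed.

Lemma piH1B x y : piH1 (x \- y) = piH1 x \- piH1 y.
Proof. by apply: funext => z; rewrite /piH1 /= -sumrB; apply: eq_bigr => a _ /=; ring. Qed.

Lemma piH1_coboundary (f : V -> R) : piH1 (coboundary f) = 0.
Proof.
apply: funext => -[z z_cycle]; rewrite /piH1 /coboundary /=.
under eq_bigr => a _ do rewrite mulrBl.
rewrite sumrB (partition_big hd predT) //= (partition_big tl predT (P := predT)) //=.
rewrite -sumrB big1 // => v _.
rewrite (eq_bigr (fun a => f v * z a)); last by move=> a /eqP ->.
rewrite [X in _ - X](eq_bigr (fun a => f v * z a)); last by move=> a /eqP ->.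
by rewrite -!mulr_sumr -mulrBr -[X in _ * X]/(boundary hd tl z v) z_cycle mulr0.
Qed.

Lemma integral_on_cycles_H1Z x : H1Z R hd tl (piH1 x) -> integral_on_cycles x.
Proof.
move=> [n piH1_x] c [_ c_cycle _ _].
rewrite (cycle_sum_piH1 x c_cycle) piH1_x -cycle_sum_piH1.
by apply: cycle_sum_int => p _; exact: intr_int.
Qed.

Definition potential (M : V -> A -> R) x (v : V) : R := \sum_b M v b * x b.

Definition linked (s : seq A) : rel V := fun u w =>
  has (fun b => (hd b == u) && (tl b == w) || (tl b == u) && (hd b == w)) s.

Lemma linked_sym s : symmetric (linked s).
Proof.
by move=> u w; apply/hasP/hasP => -[b bs h]; exists b => //;
  case/orP: h => /andP[-> ->]; rewrite ?orbT.
Qed.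

Lemma lift_linked_path s u p : path (linked s) u p -> exists q : seq (A * bool),
  [/\ all (fun r => r.1 \in s) q, map ohead q = p &
      forall p0, ohead p0 = u -> path adjacent p0 q /\ ohead (last p0 q) = last u p].
Proof.
elim: p u => [|w p IH] u /=; first by move=> _; exists [::]; split => // p0 ->.
move=> /andP[/hasP[b bs b_uw] /IH[q [q_s q_p q_path]]].
have [e [e_hd e_tl]] : exists e, ohead (b, e) = w /\ otail (b, e) = u.
  by case/orP: b_uw => /andP[/eqP <- /eqP <-]; [exists false | exists true].
exists ((b, e) :: q); split => /=; [by rewrite bs | by rewrite e_hd q_p |].
move=> p0 p0_u; have [-> ->] := q_path _ e_hd.
by rewrite /adjacent p0_u e_tl eqxx.
Qed.

Lemma closing_cycle s a : a \notin s -> connect (linked s) (hd a) (tl a) ->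
  exists q, [/\ oriented_cycle hd tl ((a, true) :: q), all (fun r => r.1 \in s) q,
     path adjacent (a, true) q & ohead (last (a, true) q) = tl a].
Proof.
move=> a_s /connectP[p0 p0_path p0_last].
case: (shortenP p0_path) p0_last => p p_path p_uniq _ p_last.
have [q [q_s q_p /(_ (a, true) erefl) [q_path q_last]]] := lift_linked_path p_path.
rewrite -p_last in q_last; exists q; split => //; split => //=.
- by rewrite rcons_path; apply/andP; split; [exact: q_path | rewrite /= q_last].
- by rewrite -q_p in p_uniq.
case: q q_s {q_p q_path q_last} => [|r [|? ?]] //= r_s ar.
by move: r_s; rewrite -ar (negPf a_s).
Qed.

Lemma path_cycle_sum x (f : V -> R) p0 q : path adjacent p0 q ->
  cycle_sum x q =
  f (ohead (last p0 q)) - f (ohead p0) + cycle_sum (x \- coboundary f) q.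
Proof.
move=> /(sum_path_telescope f) <-; rewrite /cycle_sum -big_split /=.
by apply: eq_bigr => p _; rewrite -osign_coboundary -mulrDr addrC subrK.
Qed.

(* For M built along a spanning forest, reduce M x is integral as soon as x has
   integral cycle sums; as potential M is linear, reduce M is continuous and
   leaves the class piH1 x unchanged. *)
Definition reduce M x : A -> R := x \- coboundary (potential M x).

Definition reduced_on M x (s : seq A) := {in s, forall b, reduce M x b \is a Num.int}.

Lemma closing_arrow_reduced M s a x : integral_on_cycles x -> reduced_on M x s ->
  a \notin s -> connect (linked s) (hd a) (tl a) -> reduced_on M x [:: a].
Proof.
move=> x_int x_red a_s /(closing_cycle a_s)[q [q_cycle q_s q_path q_last]].
move=> _ /predU1P[-> | //]; rewrite /reduce; set f := potential M x.
have red_int : cycle_sum (x \- coboundary f) q \is a Num.int.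
  by apply: cycle_sum_int => p p_q; apply: x_red; exact: (allP q_s).
suff -> : (x \- coboundary f) a =
    cycle_sum x ((a, true) :: q) - cycle_sum (x \- coboundary f) q.
  exact: rpredB (x_int _ q_cycle) red_int.
rewrite cycle_sum_cons (path_cycle_sum x f q_path) q_last.
by rewrite /osign /coboundary /=; ring.
Qed.

Lemma potential_shift M (k : V -> R) (w : A -> R) x v :
  potential (fun v b => M v b + k v * w b) x v =
  potential M x v + k v * \sum_b w b * x b.
Proof. by rewrite /potential mulr_sumr -big_split /=; apply: eq_bigr => b _; ring. Qed.

Lemma separating_arrow_potential M s a :
  (forall x, integral_on_cycles x -> reduced_on M x s) ->
  ~~ connect (linked s) (hd a) (tl a) ->
  exists M', forall x, integral_on_cycles x -> reduced_on M' x (a :: s).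
Proof.
move=> M_red a_sep.
(* shift the potential on the component of hd a by the defect of a *)
pose K v : R := (connect (linked s) (hd a) v)%:R.
pose w b := (b == a)%:R - M (hd a) b + M (tl a) b.
exists (fun v b => M v b + K v * w b) => x x_int b; rewrite /reduce.
have w_x : \sum_b w b * x b = (x \- coboundary (potential M x)) a.
  rewrite /w /coboundary /potential /=.
  under eq_bigr => c _ do rewrite !mulrDl mulNr.
  rewrite !big_split /= sumrN (bigD1 a) //= eqxx mul1r big1 ?addr0; first ring.
  by move=> c /negPf ->; rewrite mul0r.
rewrite /= /coboundary !(potential_shift M K w) w_x /=.
set r := x a - _.
rewrite in_cons => /predU1P[-> | b_s].
  rewrite /K connect0 (negPf a_sep).
  by apply/intrP; exists 0; rewrite /r /coboundary /=; ring.
have conn_b : connect (linked s) (hd a) (hd b) = connect (linked s) (hd a) (tl b).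
  have b_link : linked s (hd b) (tl b) by apply/hasP; exists b => //; rewrite !eqxx.
  by apply/idP/idP => conn; apply: connect_trans conn (connect1 _); rewrite // linked_sym.
rewrite /K conn_b; set P := potential M x; set k := _%:R.
suff -> : x b - (P (hd b) + k * r - (P (tl b) + k * r)) = x b - (P (hd b) - P (tl b)).
  exact: (M_red x x_int b b_s).
by ring.
Qed.

Lemma exists_reducing_potential (s : seq A) :
  exists M, forall x, integral_on_cycles x -> reduced_on M x s.
Proof.
elim: s => [|a s [M M_red]]; first by exists (fun _ _ => 0).
have [a_s | a_s] := boolP (a \in s).
  by exists M => x x_int b; rewrite in_cons => /predU1P[-> | ]; apply: M_red.
have [conn | sep] := boolP (connect (linked s) (hd a) (tl a)).
  exists M => x x_int b; rewrite in_cons => /predU1P[-> | ]; last exact: M_red.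
  by apply: (closing_arrow_reduced x_int (M_red x x_int) a_s conn); rewrite inE.
exact: separating_arrow_potential M_red sep.
Qed.

Lemma piH1_reduce M x : piH1 (reduce M x) = piH1 x.
Proof. by rewrite piH1B piH1_coboundary; apply: funext => z; rewrite /= subr0. Qed.

Lemma exists_integral_reduction : exists M,
  forall x, integral_on_cycles x -> forall a, reduce M x a \is a Num.int.
Proof.
have [M M_red] := exists_reducing_potential (enum A).
by exists M => x x_int a; apply: M_red; rewrite ?mem_enum.
Qed.

Lemma H1Z_integral_on_cycles x : integral_on_cycles x -> H1Z R hd tl (piH1 x).
Proof.
move=> x_int; have [M M_int] := exists_integral_reduction.
exists (fun a => Num.floor (reduce M x a)); rewrite -(piH1_reduce M x).
by congr piH1; apply: funext => a; rewrite floorK ?M_int.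
Qed.

End CycleSums.

Section Parametrization.
Variable R : realType.
Variables (V A : finType) (hd tl : A -> V).
Local Notation Y := (YU1 R hd tl).
Local Notation zeta := (zeta R).
Implicit Types (x : A -> R) (lam : {ptws A -> R[i]}).

Lemma prod_opow_e2pi lam x c : (forall a, e2pi (x a) = lam a) ->
  \prod_(p <- c) opow (lam p.1) p.2 = e2pi (cycle_sum x c).
Proof.
move=> lamE; elim: c => [|p c IH]; first by rewrite /cycle_sum !big_nil e2pi0.
rewrite big_cons cycle_sum_cons e2piD IH -lamE.
by case: p => a [] /=; rewrite /osign ?mul1r // mulN1r e2piN.
Qed.

Lemma e2pi_zeta lam : Y lam -> forall a, e2pi (zeta lam a) = lam a.
Proof. by move=> [lam1 _] a; rewrite /zeta nargC_arg01 ?e2pi_arg01. Qed.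

Lemma zeta_gt0_lt1 lam : Y lam -> forall a, 0 < zeta lam a < 1.
Proof. by move=> [lam1 _] a; rewrite /zeta nargC_arg01 ?arg01_gt0_lt1. Qed.

Lemma zeta_arg01 lam : Y lam -> zeta lam = fun a => arg01 (lam a).
Proof. by move=> [lam1 _]; apply: funext => a; rewrite /zeta nargC_arg01. Qed.

Lemma integral_on_cycles_zeta lam : Y lam -> integral_on_cycles hd tl (zeta lam).
Proof.
move=> lamY c c_cycle; rewrite -e2pi_eq1 -(prod_opow_e2pi c (e2pi_zeta lamY)).
by apply/eqP; exact: lamY.2 c c_cycle.
Qed.

Lemma YU1_e2pi x : (forall a, 0 < x a < 1) -> integral_on_cycles hd tl x ->
  Y (fun a => e2pi (x a)).
Proof.
move=> x01 x_int; split=> [a | c c_cycle]; first exact: U1_minus_1_e2pi.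
rewrite (prod_opow_e2pi (lam := fun a => e2pi (x a)) (x := x) c) //.
by apply/eqP; rewrite e2pi_eq1 x_int.
Qed.

Lemma zeta_e2pi x : (forall a, 0 < x a < 1) -> zeta (fun a => e2pi (x a)) = x.
Proof. by move=> x01; apply: funext => a; rewrite /zeta nargC_e2pi. Qed.

End Parametrization.

Section Limits.
Variable R : realType.
Local Notation C := ((R[i] : numFieldType)^o).
Local Open Scope complex_scope.
Context (T : Type) (F : set_system T) {FF : Filter F}.

Lemma ReB (u w : R[i]) : complex.Re (u - w) = complex.Re u - complex.Re w.
Proof. by case: u w => [? ?] [? ?]. Qed.

Lemma ImB (u w : R[i]) : complex.Im (u - w) = complex.Im u - complex.Im w.
Proof. by case: u w => [? ?] [? ?]. Qed.

Lemma ltc_normc (w : R[i]) (e : R) :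
  (`|w| < e%:C) = (Num.sqrt (complex.Re w ^+ 2 + complex.Im w ^+ 2) < e).
Proof. by rewrite normc_def ltcR. Qed.

Lemma ler_norm_sqrt (a b : R) : `|a| <= Num.sqrt (a ^+ 2 + b ^+ 2).
Proof. by rewrite -sqrtr_sqr ler_sqrt ?addr_ge0 ?sqr_ge0 // lerDl sqr_ge0. Qed.

Lemma sqrt_le_normD (a b : R) : Num.sqrt (a ^+ 2 + b ^+ 2) <= `|a| + `|b|.
Proof.
rewrite -[X in _ <= X]ger0_norm ?addr_ge0 // -sqrtr_sqr ler_sqrt ?sqr_ge0 //.
rewrite sqrrD !real_normK ?num_real // -mulr_natr.
by have := mulr_ge0 (normr_ge0 a) (normr_ge0 b); lra.
Qed.

Lemma cvg_Re (f : T -> R[i]) (y : R[i]) :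
  f @ F --> y -> (fun t => complex.Re (f t)) @ F --> complex.Re y.
Proof.
move=> /(@cvgrPdist_lt _ C) fy; apply/cvgrPdist_lt => e e_gt0.
have e_gt0' : (0 : R[i]) < e%:C by rewrite ltcR.
apply: filterS (fy _ e_gt0') => t; rewrite ltc_normc ReB.
exact/le_lt_trans/ler_norm_sqrt.
Qed.

Lemma cvg_Im (f : T -> R[i]) (y : R[i]) :
  f @ F --> y -> (fun t => complex.Im (f t)) @ F --> complex.Im y.
Proof.
move=> /(@cvgrPdist_lt _ C) fy; apply/cvgrPdist_lt => e e_gt0.
have e_gt0' : (0 : R[i]) < e%:C by rewrite ltcR.
apply: filterS (fy _ e_gt0') => t; rewrite ltc_normc ImB addrC.
exact/le_lt_trans/ler_norm_sqrt.
Qed.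

Lemma cvg_complex (f : T -> R[i]) (y : R[i]) :
  (fun t => complex.Re (f t)) @ F --> complex.Re y ->
  (fun t => complex.Im (f t)) @ F --> complex.Im y -> f @ F --> y.
Proof.
move=> /cvgrPdist_lt Re_fy /cvgrPdist_lt Im_fy.
apply/(@cvgrPdist_lt _ C) => -[e e'] /[dup] e_gt0; rewrite ltcE /= => /andP[/eqP e'0 e_pos].
rewrite e'0 {e' e'0 e_gt0}.
have e2_gt0 : 0 < e / 2 by rewrite divr_gt0.
apply: filterS2 (Re_fy _ e2_gt0) (Im_fy _ e2_gt0) => t Re_lt Im_lt.
rewrite ltc_normc ReB ImB; apply: le_lt_trans (sqrt_le_normD _ _) _.
by rewrite [X in _ < X](splitr e) ltrD.
Qed.

Lemma cvg_e2pi (f : T -> R) (s : R) : f @ F --> s -> (fun t => e2pi (f t)) @ F --> e2pi s.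
Proof.
move=> fs; apply: cvg_complex => /=.
  apply: (@cvg_comp _ _ _ _ (@cos R)); last exact: continuous_cos.
  by apply: cvgMl_tmp.
apply: (@cvg_comp _ _ _ _ (@sin R)); last exact: continuous_sin.
by apply: cvgMl_tmp.
Qed.

Lemma cvg_arg01 (f : T -> R[i]) (z : R[i]) : complex.Re z != 1 ->
  f @ F --> z -> (fun t => arg01 (f t)) @ F --> arg01 z.
Proof.
move=> Re_z fz; rewrite /arg01; apply: cvgB; first exact: cvg_cst.
apply: cvgMr_tmp; apply: (@cvg_comp _ _ _ _ (@atan R)); last exact: continuous_atan.
apply: cvgM; first exact: cvg_Im.
apply: cvgV; first by rewrite subr_eq0 eq_sym.
by apply: cvgB; [exact: cvg_cst | exact: cvg_Re].
Qed.

Lemma cvg_line_path (f g s : T -> R) (a b s0 : R) :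
  f @ F --> a -> g @ F --> b -> s @ F --> s0 ->
  (fun t => line_path (f t) (g t) (s t)) @ F --> line_path a b s0.
Proof.
move=> fa gb ss0; apply: cvgD; apply: cvgM => //.
by apply: cvgB => //; exact: cvg_cst.
Qed.

End Limits.

Section Pointwise.
Variables (U : eqType) (W : topologicalType).
Context (T : Type) (F : set_system T) {FF : Filter F}.

Lemma ptws_cvg (g : T -> {ptws U -> W}) (f : {ptws U -> W}) :
  (forall u, (fun t => g t u) @ F --> f u) -> g @ F --> f.
Proof.
move=> gf; suff : g @ F --> (f : product_topology_def (fun _ : U => W)) by [].
apply/cvg_sup => u.
move=> O [? /= [[B B_open <-]] /= Bfu] /filterS; apply.
by apply: gf; exact: open_nbhs_nbhs.
Qed.

Lemma ptws_cvg_proj (g : T -> {ptws U -> W}) (f : {ptws U -> W}) u :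
  g @ F --> f -> (fun t => g t u) @ F --> f u.
Proof.
move=> gf; apply: cvg_trans (@proj_continuous U (fun _ => W) u f).
exact: cvg_app (proj u) gf.
Qed.

End Pointwise.

Lemma int_valued_continuous_constant (R : realType) (T : topologicalType)
    (B : set T) (f : T -> R) :
  connected B -> {within B, continuous f} -> (forall t, B t -> f t \is a Num.int) ->
  forall t u, B t -> B u -> f t = f u.
Proof.
move=> B_conn f_cont f_int.
have /connected_intervalP fB_itv := connected_continuous_connected B_conn f_cont.
suff f_le t u : B t -> B u -> f t <= f u -> f t = f u.
  move=> t u Bt Bu; have [tu | ut] := leP (f t) (f u); first exact: f_le.
  by apply/esym/f_le => //; exact: ltW.
move=> Bt Bu; rewrite le_eqVlt => /predU1P[// | lt_tu].
have gap : 1 <= f u - f t.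
  have /norm_intr_ge1 : f u - f t \is a Num.int by rewrite rpredB ?f_int.
  by rewrite subr_eq0 gt_eqF // ger0_norm ?subr_ge0 ?(ltW lt_tu) // => /(_ isT).
have [v Bv fv] : (f @` B) (f t + 2^-1).
  apply: fB_itv; [by exists t | by exists u |].
  by apply/andP; split; lra.
have /norm_intr_ge1 : (2^-1 : R) \is a Num.int.
  by rewrite (_ : 2^-1 = f v - f t) ?rpredB ?f_int // fv; ring.
by rewrite ger0_norm ?invr_ge0 // invr_eq0 pnatr_eq0 => /(_ isT); lra.
Qed.

Lemma line_path_gt0_lt1 (R : realType) (a b t : R) :
  0 < a < 1 -> 0 < b < 1 -> 0 <= t <= 1 -> 0 < line_path a b t < 1.
Proof.
wlog ab : a b t / a <= b => [wlog_ab a01 b01 t01 | a01 b01 /andP[t0 t1]].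
  have [|/ltW ba] := leP a b; first by move=> ab; exact: wlog_ab.
  rewrite line_path_sym; apply: wlog_ab => //.
  by move: t01 => /andP[? ?]; apply/andP; split; lra.
have lp_ge : a <= line_path a b t by rewrite -{1}(line_path0 a b) leW_line_path.
have lp_le : line_path a b t <= b by rewrite -{2}(line_path1 a b) leW_line_path.
by move: a01 b01 => /andP[? ?] /andP[? ?]; apply/andP; split; lra.
Qed.

Section Components.
Variable R : realType.
Variables (V A : finType) (hd tl : A -> V).
Local Notation Y := (YU1 R hd tl).
Local Notation zeta := (zeta R).
Local Notation piH1 := (piH1 R hd tl).
Local Notation class lam := (piH1 (zeta lam)).
Implicit Types (x y : A -> R) (lam mu : {ptws A -> R[i]}).

Definition segment x y (s : R) : {ptws A -> R[i]} :=
  fun a => e2pi (line_path (x a) (y a) s).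

Lemma piH1_line_path x y s :
  piH1 (fun a => line_path (x a) (y a) s) =
  fun z => line_path (piH1 x z) (piH1 y z) s.
Proof.
apply: funext => z; rewrite /piH1 /line_path !mulr_sumr -big_split.
by apply: eq_bigr => a _ /=; ring.
Qed.

Lemma segment_fibre lam mu s : Y lam -> Y mu -> class lam = class mu ->
  0 <= s <= 1 ->
  Y (segment (zeta lam) (zeta mu) s) /\ class (segment (zeta lam) (zeta mu) s) = class lam.
Proof.
move=> lamY muY e s01.
have lp01 a : 0 < line_path (zeta lam a) (zeta mu a) s < 1.
  by apply: line_path_gt0_lt1; [exact: zeta_gt0_lt1 lamY a | exact: zeta_gt0_lt1 muY a |].
have class_lp : piH1 (fun a => line_path (zeta lam a) (zeta mu a) s) = class lam.
  by rewrite piH1_line_path -e; apply: funext => z; rewrite line_path_flat.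
rewrite /segment zeta_e2pi //; split=> //.
apply: YU1_e2pi => //; apply: integral_on_cycles_H1Z.
by rewrite class_lp; exact/H1Z_integral_on_cycles/integral_on_cycles_zeta.
Qed.

Lemma segment0 lam y : Y lam -> segment (zeta lam) y 0 = lam.
Proof. by move=> lamY; apply: funext => a; rewrite /segment line_path0 (e2pi_zeta lamY). Qed.

Lemma segment1 x lam : Y lam -> segment x (zeta lam) 1 = lam.
Proof. by move=> lamY; apply: funext => a; rewrite /segment line_path1 (e2pi_zeta lamY). Qed.

Lemma continuous_segment x y : continuous (segment x y).
Proof.
move=> s; apply: ptws_cvg => a; apply: cvg_e2pi.
by apply: cvg_line_path; [exact: cvg_cst | exact: cvg_cst | exact: cvg_id].
Qed.

Lemma cvg_reduce M a (T : Type) (F : set_system T) {FF : Filter F}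
    (g : T -> A -> R) (y : A -> R) :
  (forall b, (fun t => g t b) @ F --> y b) ->
  (fun t => reduce hd tl M (g t) a) @ F --> reduce hd tl M y a.
Proof.
move=> gy.
have cvg_potential v : (fun t => potential M (g t) v) @ F --> potential M y v.
  apply: cvg_big => [|b _]; first exact: add_continuous.
  exact: cvgMl_tmp (gy b).
by apply: cvgB; [exact: gy | apply: cvgB].
Qed.

Lemma connected_component_of_class lam mu : Y lam -> Y mu -> class lam = class mu ->
  connected_component Y lam mu.
Proof.
move=> lamY muY e.
have in01 (s : R) : s \in `[0, 1] = (0 <= s <= 1) by rewrite in_itv.
exists (segment (zeta lam) (zeta mu) @` [set` `[0, 1]]); last first.
  by exists 1; [rewrite /= in01 lexx ler01 | exact: segment1].
split.
- by exists 0; [rewrite /= in01 lexx ler01 | exact: segment0].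
- by move=> _ [s s01 <-]; apply: (segment_fibre lamY muY e _).1; rewrite -in01.
apply: connected_continuous_connected.
  by apply/connected_intervalP; exact: interval_is_interval.
exact/continuous_subspaceT/continuous_segment.
Qed.

Lemma class_of_connected_component lam mu : connected_component Y lam mu ->
  class lam = class mu.
Proof.
move=> [B [Blam BY B_conn] Bmu].
have [M M_int] := exists_integral_reduction R hd tl.
suff red_eq : forall a, reduce hd tl M (zeta lam) a = reduce hd tl M (zeta mu) a.
  rewrite -(piH1_reduce hd tl M (zeta lam)) -(piH1_reduce hd tl M (zeta mu)).
  by rewrite (funext red_eq).
move=> a.
pose psi (nu : {ptws A -> R[i]}) := reduce hd tl M (fun b => arg01 (nu b)) a.
have psiE nu : Y nu -> psi nu = reduce hd tl M (zeta nu) a.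
  by move=> nuY; rewrite /psi (zeta_arg01 nuY).
rewrite -(psiE _ (BY _ Blam)) -(psiE _ (BY _ Bmu)).
apply: (int_valued_continuous_constant B_conn) => // [| nu Bnu].
  apply: continuous_in_subspaceT => nu /set_mem /BY nuY.
  have arg_cvg b : (fun t : {ptws A -> R[i]} => arg01 (t b)) @ nbhs nu --> arg01 (nu b).
    apply: cvg_arg01; first exact: U1_minus_1_Re_neq1 (nuY.1 b).
    exact: (@ptws_cvg_proj _ _ _ (nbhs nu) id nu b cvg_id).
  exact: (@cvg_reduce M a _ (nbhs nu) _ (fun t b => arg01 (t b)) _ arg_cvg).
have nuY := BY _ Bnu; rewrite psiE //; exact: M_int (integral_on_cycles_zeta nuY) a.
Qed.

Lemma connected_componentE lam mu : Y lam ->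
  connected_component Y lam mu <-> Y mu /\ class mu = class lam.
Proof.
move=> lamY; split=> [lam_mu | [muY e]].
  split; first exact: connected_component_sub lam_mu.
  exact/esym/class_of_connected_component.
exact: connected_component_of_class.
Qed.

Lemma contractible_connected_component lam : Y lam ->
  contractible R (connected_component Y lam).
Proof.
move=> lamY; exists lam; split; first exact: connected_component_refl.
exists (fun p => segment (zeta p.2) (zeta lam) p.1); split.
- pose H (p : R * {ptws A -> R[i]}) : {ptws A -> R[i]} :=
    segment (fun a => arg01 (p.2 a)) (zeta lam) p.1.
  apply: (@subspace_eq_continuous _ _ _ H).
    move=> p /set_mem[_ /(connected_componentE _ lamY)[muY _]].
    by rewrite /from_subspace /H (zeta_arg01 muY).
  apply: continuous_in_subspaceT => p /set_mem[_ /(connected_componentE _ lamY)[muY _]].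
  apply: (@ptws_cvg _ _ _ (nbhs p) _ H) => a; apply: cvg_e2pi; apply: cvg_line_path.
  + apply: cvg_arg01; first exact: U1_minus_1_Re_neq1 (muY.1 a).
    exact: (@ptws_cvg_proj _ _ _ (nbhs p) snd p.2 a cvg_snd).
  + exact: cvg_cst.
  + exact: cvg_fst.
- move=> s mu s01 /(connected_componentE _ lamY)[muY e].
  apply/(connected_componentE _ lamY).
  by have [? ->] := segment_fibre muY lamY e s01.
- by move=> mu /(connected_componentE _ lamY)[muY _]; exact: segment0.
- by move=> mu _; exact: segment1.
Qed.

Lemma Zminus_class lam : Y lam -> Zminus R hd tl (class lam).
Proof.
move=> lamY; split; last exact/H1Z_integral_on_cycles/integral_on_cycles_zeta.
by exists (zeta lam); split => // a; exact: zeta_gt0_lt1 lamY a.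
Qed.

Lemma class_surj p : Zminus R hd tl p -> exists2 lam, Y lam & class lam = p.
Proof.
move=> [[x [x01 ->]] x_H1Z]; exists (fun a => e2pi (x a)); last by rewrite zeta_e2pi.
by apply: YU1_e2pi => //; exact: integral_on_cycles_H1Z.
Qed.

End Components.

Theorem proposition3p6 (R : realType) (V A : finType) (hd tl : A -> V) :
  (forall lam, YU1 R hd tl lam -> Zminus R hd tl (piH1 R hd tl (zeta R lam)))
  /\ (forall lam mu, YU1 R hd tl lam -> YU1 R hd tl mu ->
        (connected_component (YU1 R hd tl) lam mu <->
         piH1 R hd tl (zeta R lam) = piH1 R hd tl (zeta R mu)))
  /\ (forall p, Zminus R hd tl p ->
        exists lam, YU1 R hd tl lam /\ piH1 R hd tl (zeta R lam) = p)
  /\ (forall lam, YU1 R hd tl lam ->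
        contractible R (connected_component (YU1 R hd tl) lam)).
Proof.
split; first exact: Zminus_class.
split.
  move=> lam mu lamY muY; split; first exact: class_of_connected_component.
  exact: connected_component_of_class.
split; last exact: contractible_connected_component.
by move=> p /class_surj[lam lamY <-]; exists lam.
Qed.
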